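(* (''Length contraction/extension'' formula.) Let $A$, $B$, $C$ be inertial bodies such that $v_{AC}=v_{BC}$. Let $\Delta x=|x_{AA}(\tau_A)-x_{BA}(\tau_A)|$ be the distance between $A$ and $B$ in the reference frame $O_A$, and let $\Delta x'=|x_{AC}(\tau_C)-x_{BC}(\tau_C)|$ be the distance between $A$ and $B$ in the reference frame $O_C$. Then $\Delta x'=w_{CA}\cdot\Delta x$.
   Context: Events are column vectors $(x,\tau)^T$. Each inertial body $X$ carries a reference frame $O_X$ whose time coordinate is the proper time $\tau_X$ of $X$. For inertial bodies $X,Y$, $x_{XY}(\tau_Y)$ and $\tau_{XY}(\tau_Y)$ denote the spatial coordinate and proper time of $X$ at moment $\tau_Y$ in frame $O_Y$, and $v_{XY}$, $w_{XY}$ the constant spatial velocity and proper time velocity of $X$ in $O_Y$, so $x_{XY}(\tau_Y)=x_{XY}(0)+v_{XY}\tau_Y$ and $\tau_{XY}(\tau_Y)=\tau_{XY}(0)+w_{XY}\tau_Y$; by convention $x_{XX}\equiv0$, $v_{XX}=0$, $w_{XX}=1$, $\tau_{XX}(\tau_X)=\tau_X$. The coordinates of the same event in two inertial frames $O_X$, $O_Y$ are related by an affine map $L_{XY}:O_X\to O_Y$; when the origins coincide it is linear, $L_{XY}=\begin{pmatrix}1/w_{XY} & v_{XY}/w_{XY}\\ v_{XY}/w_{XY} & 1/w_{XY}\end{pmatrix}$; maps compose ($L_{XZ}=L_{YZ}L_{XY}$) and $L_{YX}=L_{XY}^{-1}$. *)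

From Stdlib Require Import Reals.
Open Scope R_scope.

(* An event is a column vector (x, tau)^T, represented as a pair. *)
Definition event := (R * R)%type.

Definition Lmat (v w : R) (e : event) : event :=
  ((1 / w) * fst e + (v / w) * snd e, (v / w) * fst e + (1 / w) * snd e).

Definition addev (e b : event) : event := (fst e + fst b, snd e + snd b).

(* For bodies X Y:
     xb X Y t = x_{XY}(t)   (spatial coordinate of X at moment t of O_Y)
     tb X Y t = tau_{XY}(t) (proper time of X at moment t of O_Y)
     vb X Y   = v_{XY},  wb X Y = w_{XY}
     Lb X Y   = L_{XY} : O_X -> O_Y. *)
Record Kinematics := {
  Body : Type;
  xb : Body -> Body -> R -> R;
  tb : Body -> Body -> R -> R;
  vb : Body -> Body -> R;
  wb : Body -> Body -> R;
  Lb : Body -> Body -> event -> event;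
  xb_lin : forall X Y t, xb X Y t = xb X Y 0 + vb X Y * t;
  tb_lin : forall X Y t, tb X Y t = tb X Y 0 + wb X Y * t;
  xb_self : forall X t, xb X X t = 0;
  vb_self : forall X, vb X X = 0;
  wb_self : forall X, wb X X = 1;
  tb_self : forall X t, tb X X t = t;
  (* proper time runs forward: proper time velocities are positive *)
  wb_pos : forall X Y, 0 < wb X Y;
  Lb_affine : forall X Y, exists b : event,
      forall e, Lb X Y e = addev (Lmat (vb X Y) (wb X Y) e) b;
  Lb_comp : forall X Y Z e, Lb X Z e = Lb Y Z (Lb X Y e);
  Lb_inv : forall X Y e, Lb Y X (Lb X Y e) = e /\ Lb X Y (Lb Y X e) = e;
  (* L_{XY} relates the coordinates of the same event: the event where
     body Z is at moment s of O_X (with proper time tau_{ZX}(s)) is, in O_Y,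
     the event where Z is at some moment t of O_Y, with the same proper time. *)
  Lb_events : forall X Y Z s, exists t,
      Lb X Y (xb Z X s, s) = (xb Z Y t, t) /\ tb Z Y t = tb Z X s
}.

Arguments xb {k}. Arguments tb {k}. Arguments vb {k}.
Arguments wb {k}. Arguments Lb {k}.

(* The transformation L_{AC} sends the worldline of a body to its worldline,
   so comparing the images of two events of one worldline yields the
   relativistic velocity addition law v_{ZC} (1 + v_{ZA} v_{AC}) = v_{ZA} + v_{AC},
   while the images of the events at time 0 relate the positions x_{ZA}(0)
   and x_{ZC}(0).  From L_{CA} L_{AC} = id one gets w_{AC} w_{CA} = 1 - v_{AC}^2,
   which is positive.  If v_{AC} = v_{BC}, velocity addition forces v_{BA} = 0,
   so B rests at distance |x_{BA}(0)| from A in O_A, and the positions at time 0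
   show that the distance in O_C is (1 - v_{AC}^2) / w_{AC} = w_{CA} times that. *)

From Stdlib Require Import Reals Lra Psatz.
Open Scope R_scope.

Lemma Lmat_origin (v w : R) : Lmat v w (0, 0) = (0, 0).
Proof. unfold Lmat; simpl; f_equal; ring. Qed.

Lemma Lmat_left_inverse (v w v' w' : R) (b c : event) :
  0 < w -> 0 < w' ->
  (forall e, addev (Lmat v' w' (addev (Lmat v w e) b)) c = e) ->
  w * w' = 1 - v ^ 2.
Proof.
  intros Hw Hw' Hinv.
  destruct b as [b1 b2], c as [c1 c2].
  pose proof (Hinv (0, 0)) as I0; pose proof (Hinv (1, 0)) as I1.
  unfold Lmat, addev in I0, I1; simpl in I0, I1.
  injection I0 as I0x I0t; injection I1 as I1x I1t.
  (* subtracting the two images isolates the first column of the product matrix *)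
  assert (Hdiag : 1 / w' * (1 / w) + v' / w' * (v / w) = 1) by lra.
  assert (Hoff : v' / w' * (1 / w) + 1 / w' * (v / w) = 0) by lra.
  assert (Hv' : v' + v = 0).
  { replace (v' + v) with ((v' / w' * (1 / w) + 1 / w' * (v / w)) * (w * w'))
      by (field; lra).
    rewrite Hoff; ring. }
  assert (Hprod : 1 + v' * v = (1 / w' * (1 / w) + v' / w' * (v / w)) * (w * w'))
    by (field; lra).
  rewrite Hdiag in Hprod; nra.
Qed.

Section Kinematics.

Variable K : Kinematics.

Lemma Lb_affine_origin (X Y : Body K) (e : event) :
  Lb X Y e = addev (Lmat (vb X Y) (wb X Y) e) (Lb X Y (0, 0)).
Proof.
  destruct (Lb_affine K X Y) as [b Hb].
  rewrite !Hb, Lmat_origin; destruct b; unfold addev; simpl; f_equal; ring.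
Qed.

Lemma wb_mul_wb_sym (X Y : Body K) : wb X Y * wb Y X = 1 - vb X Y ^ 2.
Proof.
  apply (Lmat_left_inverse _ _ (vb Y X) _ (Lb X Y (0, 0)) (Lb Y X (0, 0)));
    try apply wb_pos.
  intro e; rewrite <- !Lb_affine_origin; apply Lb_inv.
Qed.

Lemma vb_sqr_lt1 (X Y : Body K) : vb X Y ^ 2 < 1.
Proof.
  pose proof (wb_mul_wb_sym X Y); pose proof (wb_pos K X Y); pose proof (wb_pos K Y X).
  nra.
Qed.

Lemma worldline_transform (X Y Z : Body K) (s : R) :
  (xb Z X s + vb X Y * s) / wb X Y + fst (Lb X Y (0, 0)) =
  xb Z Y 0 + vb Z Y * ((vb X Y * xb Z X s + s) / wb X Y + snd (Lb X Y (0, 0))).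
Proof.
  destruct (Lb_events K X Y Z s) as [t [Ht _]].
  rewrite Lb_affine_origin in Ht; unfold Lmat, addev in Ht; simpl in Ht.
  injection Ht as Hx Htime.
  pose proof (wb_pos K X Y).
  rewrite (xb_lin K Z Y t), <- Htime in Hx.
  replace (xb Z Y 0 + vb Z Y * ((vb X Y * xb Z X s + s) / wb X Y + snd (Lb X Y (0, 0))))
    with (1 / wb X Y * xb Z X s + vb X Y / wb X Y * s + fst (Lb X Y (0, 0)))
    by (rewrite Hx; field; lra).
  field; lra.
Qed.

Lemma vb_add (X Y Z : Body K) :
  vb Z X + vb X Y = vb Z Y * (1 + vb Z X * vb X Y).
Proof.
  pose proof (worldline_transform X Y Z 0) as H0.
  pose proof (worldline_transform X Y Z 1) as H1.
  rewrite (xb_lin K Z X 0) in H0; rewrite (xb_lin K Z X 1) in H1.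
  pose proof (wb_pos K X Y).
  assert (Hdiff : (vb Z X + vb X Y) / wb X Y = vb Z Y * (1 + vb Z X * vb X Y) / wb X Y).
  { unfold Rdiv in *; ring_simplify in H0; ring_simplify in H1; ring_simplify; lra. }
  apply (Rmult_eq_reg_r (/ wb X Y)); [exact Hdiff | apply Rinv_neq_0_compat; lra].
Qed.

Lemma xb_origin_transform (X Y Z : Body K) :
  xb Z Y 0 = (1 - vb Z Y * vb X Y) * xb Z X 0 / wb X Y
             + fst (Lb X Y (0, 0)) - vb Z Y * snd (Lb X Y (0, 0)).
Proof.
  pose proof (worldline_transform X Y Z 0) as H0.
  pose proof (wb_pos K X Y).
  replace ((1 - vb Z Y * vb X Y) * xb Z X 0 / wb X Y) with
    ((xb Z X 0 + vb X Y * 0) / wb X Y - vb Z Y * ((vb X Y * xb Z X 0 + 0) / wb X Y))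
    by (field; lra).
  lra.
Qed.

Lemma vb_comoving (A B C : Body K) : vb A C = vb B C -> vb B A = 0.
Proof.
  intro Hv.
  pose proof (vb_add A C B) as Hadd; rewrite <- Hv in Hadd.
  pose proof (vb_sqr_lt1 A C).
  assert (Hprod : vb B A * (1 - vb A C ^ 2) = 0) by nra.
  apply Rmult_integral in Hprod; destruct Hprod; [assumption | lra].
Qed.

Lemma xb_diff_comoving (A B C : Body K) (tauA tauC : R) :
  vb A C = vb B C ->
  xb A C tauC - xb B C tauC = wb C A * (xb A A tauA - xb B A tauA).
Proof.
  intro Hv.
  pose proof (vb_comoving A B C Hv) as HBA.
  pose proof (xb_origin_transform A C A) as HA.
  pose proof (xb_origin_transform A C B) as HB.
  pose proof (wb_mul_wb_sym A C) as Hw; pose proof (wb_pos K A C).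
  rewrite xb_self in HA.
  rewrite (xb_lin K A C tauC), (xb_lin K B C tauC), (xb_lin K B A tauA), xb_self, HBA, <- Hv.
  rewrite <- Hv in HB.
  replace (wb C A) with ((1 - vb A C ^ 2) / wb A C) by (rewrite <- Hw; field; lra).
  rewrite HA, HB; field; lra.
Qed.

End Kinematics.

Theorem corollary4 (K : Kinematics) (A B C : Body K) :
  vb A C = vb B C ->
  forall tauA tauC : R,
    Rabs (xb A C tauC - xb B C tauC) = wb C A * Rabs (xb A A tauA - xb B A tauA).
Proof.
  intros Hv tauA tauC.
  rewrite (xb_diff_comoving K A B C tauA tauC Hv), Rabs_mult.
  rewrite (Rabs_pos_eq (wb C A)) by (left; apply wb_pos).
  reflexivity.
Qed.
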